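(* Let $G$ be an irreducible complex reflection group acting on $V\cong\mathbb{C}^2$. If $z\in G$ is a nonidentity central element and $G$ contains no reflection of the same order as $z$, then $\ell(z)>\operatorname{codim}(z)$.
   Context: A reflection is an element of $GL(V)$ of finite order fixing a hyperplane pointwise; a complex reflection group is a finite subgroup of $GL(V)$ generated by reflections, irreducible if $V$ is an irreducible $G$-module. $\ell(g)$ is the minimal number of reflections in $G$ whose product is $g$ ($\ell(1)=0$), and $\operatorname{codim}(g)=2-\dim\{v\in V:gv=v\}$. *)

From mathcomp Require Import all_boot all_order all_algebra.
From mathcomp Require Import complex.
From mathcomp Require Import Rstruct.
Set Implicit Arguments. Unset Strict Implicit. Unset Printing Implicit Defensive.
Import GRing.Theory Num.Theory.
Local Open Scope ring_scope.

Definition C : numClosedFieldType := Rdefinitions.R[i].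

(* Elements of GL(V), V = C^2, are 2x2 matrices acting on column vectors
   v |-> g *m v.  A subspace of V is encoded (mxalgebra style) by the row
   space of a matrix U whose rows are the transposes of spanning vectors. *)
Notation mx2 := 'M[C]_2.

(* Fixed space {v : g v = v}, as the row space of transposed vectors:
   (g - 1) v = 0  <->  v^T (g - 1)^T = 0. *)
Definition fixspace (g : mx2) : 'M[C]_2 := kermx (g - 1%:M)^T.

Definition codim (g : mx2) : nat := (2 - \rank (fixspace g))%N.

Definition finite_order (g : mx2) : Prop := exists n : nat, (0 < n)%N /\ g ^+ n = 1.

Definition mx_order (g : mx2) (n : nat) : Prop :=
  [/\ (0 < n)%N, g ^+ n = 1 & forall m : nat, (0 < m)%N -> g ^+ m = 1 -> (n <= m)%N].

Definition is_reflection (g : mx2) : Prop :=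
  [/\ g \in unitmx, finite_order g & \rank (fixspace g) = 1%N].

Definition is_subgroup_GL (G : seq mx2) : Prop :=
  [/\ 1%:M \in G,
      (forall g, g \in G -> g \in unitmx),
      (forall g h, g \in G -> h \in G -> g *m h \in G) &
      (forall g, g \in G -> invmx g \in G)].

Definition refl_word (G : seq mx2) (g : mx2) (s : seq mx2) : Prop :=
  (forall r, r \in s -> r \in G /\ is_reflection r) /\
  g = foldr (fun a b => a *m b) 1%:M s.

(* G is generated by its reflections (G finite, so products suffice) *)
Definition generated_by_reflections (G : seq mx2) : Prop :=
  forall g, g \in G -> exists s, refl_word G g s.

Definition complex_reflection_group (G : seq mx2) : Prop :=
  is_subgroup_GL G /\ generated_by_reflections G.

Definition irreducible_action (G : seq mx2) : Prop :=
  forall U : mx2, (forall g, g \in G -> (U *m g^T <= U)%MS) ->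
    \rank U = 0%N \/ row_full U.

Definition refl_length (G : seq mx2) (g : mx2) (n : nat) : Prop :=
  (exists s, refl_word G g s /\ size s = n) /\
  (forall s, refl_word G g s -> (n <= size s)%N).

Definition central (G : seq mx2) (z : mx2) : Prop :=
  forall g, g \in G -> z *m g = g *m z.

(* By Schur's lemma the central element z is a scalar a%:M with a <> 1, and
   codim z <= 2, so it suffices to show that z is not a product of at most two
   reflections.  z <> 1 rules out the empty product, and z itself being a
   reflection of its own order rules out one reflection.  If z = r1 r2 with
   reflections r1, r2, then r1 fixes a vector and r1 = a r2^-1 scales the
   vectors fixed by r2 by a; the eigenvalues 1 <> a of r1 are distinct, so r1
   is diagonalisable and has the same order as a, i.e. as z. *)

From mathcomp Require Import all_boot all_order all_algebra.
From mathcomp Require Import complex.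
From mathcomp Require Import Rstruct.
From Stdlib Require Import ClassicalDescription.
Set Implicit Arguments. Unset Strict Implicit. Unset Printing Implicit Defensive.
Import GRing.Theory Num.Theory.
Local Open Scope ring_scope.

Lemma ex_minn_Prop (P : nat -> Prop) :
  (exists n, P n) -> exists n, P n /\ forall m, P m -> (n <= m)%N.
Proof.
pose p n := if excluded_middle_informative (P n) then true else false.
have pP n : reflect (P n) (p n) by rewrite /p; case: excluded_middle_informative; constructor.
case=> n0 /pP p_n0; have [n /pP Pn n_min] := ex_minnP (ex_intro p n0 p_n0).
by exists n; split=> // m /pP /n_min.
Qed.

Lemma mx_order_exists (g : mx2) : finite_order g -> exists n, mx_order g n.
Proof.
case/ex_minn_Prop=> n [[n_gt0 g_n] n_min].
by exists n; split=> // m m_gt0 g_m; apply: n_min.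
Qed.

Lemma mx_order_eq (g h : mx2) (n : nat) :
  (forall m, (g ^+ m == 1) = (h ^+ m == 1)) -> mx_order g n -> mx_order h n.
Proof.
move=> gh [n_gt0 g_n n_min]; split=> //; first by apply/eqP; rewrite -gh g_n.
by move=> m m_gt0 /eqP; rewrite -gh => /eqP; apply: n_min.
Qed.

Lemma char_poly_trmx (R : comNzRingType) (n : nat) (A : 'M[R]_n) :
  char_poly A^T = char_poly A.
Proof.
rewrite /char_poly -det_tr; congr (\det _); apply/matrixP=> i j.
by rewrite !mxE eq_sym.
Qed.

Lemma eigenvalue_trmx (F : fieldType) (n : nat) (A : 'M[F]_n.+1) (a : F) :
  eigenvalue A^T a = eigenvalue A a.
Proof. by rewrite !eigenvalue_root_char char_poly_trmx. Qed.

(* Distinct eigenvalues force char_poly A = \prod_(x <- s) ('X - x%:P), which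
   divides 'X^m - 1 once every x ^+ m = 1; Cayley-Hamilton then gives A ^+ m = 1. *)
Lemma distinct_eigenvalues_expr_eq1 (F : fieldType) (n : nat) (A : 'M[F]_n.+1)
    (s : seq F) (m : nat) :
  uniq s -> size s = n.+1 -> {in s, forall x, eigenvalue A x} ->
  (A ^+ m == 1) = all (fun x => x ^+ m == 1) s.
Proof.
move=> s_uniq s_size s_eig; apply/eqP/allP => [Am1 x /s_eig /eigenvalueP [v vA v_nz]|s_unity].
  have vAm : v *m A ^+ m = x ^+ m *: v.
    elim: m {Am1} => [|k IH]; first by rewrite !expr0 mulmx1 scale1r.
    by rewrite exprSr mulmxA IH -scalemxAl vA scalerA exprSr.
  move: vAm; rewrite Am1 mulmx1 => /eqP; rewrite -subr_eq0 -{1}[v]scale1r -scalerBl.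
  by rewrite scalemx_eq0 (negbTE v_nz) orbF subr_eq0 eq_sym.
set p := \prod_(x <- s) ('X - x%:P).
have s_roots_uniq : uniq_roots s by rewrite uniq_rootsE.
have p_char : p %= char_poly A.
  rewrite -dvdp_size_eqp ?size_prod_XsubC ?size_char_poly ?s_size //.
  apply: uniq_roots_dvdp => //; apply/allP=> x /s_eig.
  by rewrite eigenvalue_root_char.
have : char_poly A %| 'X^m - 1.
  rewrite -(eqp_dvdl _ p_char); apply: uniq_roots_dvdp => //.
  by apply/allP=> x /s_unity /eqP xm1; rewrite rootE !hornerE xm1 subrr.
case/dvdpP=> q /(congr1 (horner_mx A)).
rewrite rmorphM /= Cayley_Hamilton mulr0 rmorphB rmorphXn /= horner_mx_X rmorph1.
by move/eqP; rewrite subr_eq0 => /eqP.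
Qed.

Lemma fixspace_eigenspace (g : mx2) : fixspace g = eigenspace g^T 1.
Proof. by rewrite /fixspace /eigenspace linearB /= trmx1. Qed.

Lemma reflection_eigenvalue1 (r : mx2) : is_reflection r -> eigenvalue r 1.
Proof.
case=> _ _ r_fix; rewrite -eigenvalue_trmx /eigenvalue -fixspace_eigenspace.
by rewrite -mxrank_eq0 r_fix.
Qed.

Lemma reflection_mul_scalar_eigenvalue (r1 r2 : mx2) (a : C) :
  is_reflection r2 -> r1 *m r2 = a%:M -> eigenvalue r1 a.
Proof.
move=> /reflection_eigenvalue1; rewrite -eigenvalue_trmx => /eigenvalueP [v vr2 v_nz] r12.
rewrite -eigenvalue_trmx; apply/eigenvalueP; exists v => //.
by rewrite -[in LHS](scale1r v) -vr2 -mulmxA -trmx_mul r12 tr_scalar_mx mul_mx_scalar.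
Qed.

Lemma reflection_mul_scalar_expr_eq1 (r1 r2 : mx2) (a : C) (m : nat) :
  is_reflection r1 -> is_reflection r2 -> r1 *m r2 = a%:M -> a != 1 ->
  (r1 ^+ m == 1) = (a ^+ m == 1).
Proof.
move=> r1_refl r2_refl r12 a_neq1.
rewrite (@distinct_eigenvalues_expr_eq1 _ _ _ [:: 1; a]) //=.
- by rewrite expr1n eqxx andbT.
- by rewrite inE eq_sym a_neq1.
move=> x; rewrite !inE => /orP[] /eqP ->; first exact: reflection_eigenvalue1.
exact: reflection_mul_scalar_eigenvalue r12.
Qed.

Lemma central_scalar_mx (G : seq mx2) (z : mx2) :
  irreducible_action G -> central G z -> exists a, z = a%:M.
Proof.
move=> G_irr z_central.
have [a] : exists a, eigenvalue z^T a.
  have /closed_rootP [a] : size (char_poly z^T) != 1%N by rewrite size_char_poly.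
  by exists a; rewrite eigenvalue_root_char.
rewrite /eigenvalue; set U := eigenspace _ _ => U_nz.
have U_stable g : g \in G -> (U *m g^T <= U)%MS.
  move=> gG; apply/sub_kermxP; rewrite -mulmxA.
  have -> : g^T *m (z^T - a%:M) = (z^T - a%:M) *m g^T.
    by rewrite mulmxBl mulmxBr -!trmx_mul (z_central g gG) scalar_mxC.
  by rewrite mulmxA mulmx_ker mul0mx.
exists a; case: (G_irr U U_stable) => [/eqP | /row_fullP [B BU]].
  by rewrite mxrank_eq0 (negbTE U_nz).
have : z^T - a%:M = 0 by rewrite -[_ - _]mul1mx -BU -mulmxA mulmx_ker mulmx0.
by move/eqP; rewrite subr_eq0 => /eqP zT; rewrite -[z]trmxK zT tr_scalar_mx.
Qed.

Lemma refl_word_size_gt2 (G : seq mx2) (z : mx2) (s : seq mx2) :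
  irreducible_action G -> central G z -> z != 1%:M ->
  ~ (exists r n, [/\ r \in G, is_reflection r, mx_order r n & mx_order z n]) ->
  refl_word G z s -> (2 < size s)%N.
Proof.
move=> G_irr z_central z_neq1 no_refl [].
case: s => [|r1 [|r2 [|r3 t]]] // s_refl /= z_s; exfalso.
- by rewrite z_s eqxx in z_neq1.
- have [r1G r1_refl] := s_refl r1 (mem_head _ _).
  have [_ r1_fin _] := r1_refl; have [n r1_order] := mx_order_exists r1_fin.
  by apply: no_refl; exists r1, n; rewrite z_s mulmx1.
have [r1G r1_refl] := s_refl r1 (mem_head _ _).
have [_ r2_refl] : r2 \in G /\ is_reflection r2 by apply: s_refl; rewrite !inE eqxx orbT.
have [a z_a] := central_scalar_mx G_irr z_central.
have a_neq1 : a != 1 by apply: contraNneq z_neq1; rewrite z_a => ->.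
have [_ r1_fin _] := r1_refl; have [n r1_order] := mx_order_exists r1_fin.
apply: no_refl; exists r1, n; split=> //; apply: mx_order_eq r1_order => m.
have r12 : r1 *m r2 = a%:M by rewrite -z_a z_s mulmx1.
by rewrite z_a -rmorphXn /= fmorph_eq1 (reflection_mul_scalar_expr_eq1 m r1_refl r2_refl r12).
Qed.

Theorem mainTheorem9 (G : seq mx2) (z : mx2) :
  complex_reflection_group G ->
  irreducible_action G ->
  z \in G -> central G z -> z != 1%:M ->
  ~ (exists r n, [/\ r \in G, is_reflection r, mx_order r n & mx_order z n]) ->
  exists n, refl_length G z n /\ (codim z < n)%N.
Proof.
move=> [_ G_gen] G_irr zG z_central z_neq1 no_refl.
have [s0 z_s0] := G_gen z zG.
have [n [[s [z_s s_size]] n_min]] :=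
  ex_minn_Prop (ex_intro (fun n => exists s, refl_word G z s /\ size s = n) _
                         (ex_intro _ s0 (conj z_s0 erefl))).
exists n; split.
  by split=> [|t z_t]; [exists s | apply: n_min; exists t].
rewrite -s_size; apply: leq_ltn_trans (leq_subr _ _) _.
exact: refl_word_size_gt2 G_irr z_central z_neq1 no_refl z_s.
Qed.
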